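(* Fix any sufficiently small $\varepsilon > 0$ and integers $m = m(n)\ge \varepsilon n$, $\ell = \ell(n)\in [\varepsilon m, m]$ and $k = k(n)$ with $k+m\le n$. Let $G = (U,V,F)$ be a bipartite graph with parts $U,V\subseteq V_n$ and edge set $F$, where $|U| = k$, $|V| = m$, and every $u\in U$ has $\deg_G(u)\ge \ell$. Let $T$ be a uniformly random spanning tree of $K_n$. Then there is a constant $c = c(\varepsilon) > 0$ such that $$\Pr(F\cap E(T) = \emptyset)\le \exp(-ck).$$
   Context: $K_n$ is the complete graph on vertex set $V_n=\{v_1,\dots,v_n\}$. *)

From Stdlib Require Import Reals.
From mathcomp Require Import all_boot.
From mathcomp Require Import boolp.

Set Implicit Arguments.
Unset Strict Implicit.
Unset Printing Implicit Defensive.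

(* Vertex set V_n = 'I_n; an edge is a 2-element subset of V_n. *)
Definition Kn_edges (n : nat) : {set {set 'I_n}} := [set e : {set 'I_n} | #|e| == 2].

Definition tadj (n : nat) (T : {set {set 'I_n}}) : rel 'I_n :=
  fun x y => (x != y) && ([set x; y] \in T).

Definition graph_connected (n : nat) (T : {set {set 'I_n}}) : bool :=
  [forall x, forall y, connect (tadj T) x y].

Definition acyclic (n : nat) (T : {set {set 'I_n}}) : Prop :=
  forall s : seq 'I_n, uniq s -> 2 < size s -> ~~ cycle (tadj T) s.

Definition is_spanning_tree (n : nat) (T : {set {set 'I_n}}) : bool :=
  [&& T \subset Kn_edges n, graph_connected T & `[< acyclic T >]].

Definition spanning_trees (n : nat) : {set {set {set 'I_n}}} :=
  [set T | is_spanning_tree T].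

Definition prob_avoid (n : nat) (F : {set {set 'I_n}}) : R :=
  Rdiv (INR #|[set T in spanning_trees n | [disjoint F & T]]|)
       (INR #|spanning_trees n|).

Definition bdeg (n : nat) (V : {set 'I_n}) (F : {set {set 'I_n}}) (u : 'I_n) : nat :=
  #|[set v in V | [set u; v] \in F]|.

From Stdlib Require Import Reals.
From mathcomp Require Import all_boot.
From Stdlib Require Import Lra.
From mathcomp Require Import boolp.

Set Implicit Arguments.
Unset Strict Implicit.
Unset Printing Implicit Defensive.

(* Let u be a vertex with a set N of neighbours and X a set of edges not at u.
   Send a spanning tree T avoiding X and all edges uv (v in N), paired with
   some v in N, to (T + uv - uw, w), where w is the neighbour of u on the path
   from v to u in T.  This map is injective, and its image consists of trees
   avoiding X but not the star of u, paired with an arbitrary vertex; hence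
   #A(X + star) (n + |N|) <= n #A(X), where A(Y) is the set of spanning trees
   avoiding Y.  Adding the stars of the k vertices of U one at a time gives
   Pr(F and E(T) disjoint) <= (n / (n + l))^k <= (1 + eps^2)^-k, as
   l >= eps m >= eps^2 n. *)

Section SpanningTrees.

Variable n : nat.
Implicit Types (T X Y : {set {set 'I_n}}) (a b u v w x y : 'I_n).

Lemma tadj_sym T : symmetric (tadj T).
Proof. by move=> x y; rewrite /tadj eq_sym setUC. Qed.

Lemma subrel_tadj T1 T2 : T1 \subset T2 -> subrel (tadj T1) (tadj T2).
Proof. by move=> sT12 x y /andP[xy xyT]; rewrite /tadj xy (subsetP sT12 _ xyT). Qed.

Lemma set2_eq_cases a b x y : x != y -> [set x; y] = [set a; b] ->
  ((x == a) && (y == b)) || ((x == b) && (y == a)).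
Proof.
move=> + E.
have xab : x \in [set a; b] by rewrite -E set21.
have yab : y \in [set a; b] by rewrite -E set22.
by case/set2P: xab yab => -> /set2P[]->; rewrite !eqxx ?orbT.
Qed.

Lemma acyclic_bridge T x y : acyclic T -> x != y -> [set x; y] \in T ->
  ~~ connect (tadj (T :\ [set x; y])) x y.
Proof.
move=> acT xy xyT; apply/negP => /connectP[p pP ylast].
case: (shortenP pP) ylast => p' p'P up' _ ylast.
case: p' p'P up' ylast => [|z [|z2 p'']].
- by move=> _ _ /= yx; move: xy; rewrite yx eqxx.
- by move=> /andP[xzT _] _ /= yz; move: xzT; rewrite -yz /tadj !inE eqxx andbF.
move=> p'P up' ylast; apply/negP: (acT (x :: z :: z2 :: p'') up' isT); apply/negPn.
have p'T := sub_path (subrel_tadj (subsetDl T [set [set x; y]])) p'P.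
rewrite /cycle rcons_path p'T /= -[last _ _]/(last x [:: z, z2 & p'']) -ylast.
by rewrite /tadj eq_sym xy /= setUC xyT.
Qed.

Lemma cycle_or_connect (e e' : rel 'I_n) a b s :
  symmetric e' -> uniq s -> (2 < size s)%N -> cycle e s ->
  (forall x y, e x y -> [|| e' x y, (x == a) && (y == b) | (x == b) && (y == a)]) ->
  cycle e' s \/ connect e' a b.
Proof.
move=> sym_e' us ss cs ee'.
have e_e' : {in [pred x | x != a] &, subrel e e'}.
  move=> x y xa ya /ee' /or3P[// | /andP[/eqP xa' _] | /andP[_ /eqP ya']].
    by move: xa; rewrite inE xa' eqxx.
  by move: ya; rewrite inE ya' eqxx.
have [sa | sNa] := boolP (a \in s); last first.
  left; apply: (sub_in_cycle e_e' _ cs); apply/allP => x xs.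
  by rewrite inE; apply: contraNneq sNa => <-.
have [i s' rot_s] := rot_to sa; rewrite -(rot_cycle i) rot_s.
rewrite -(rot_cycle i) rot_s in cs; rewrite -(rot_uniq i) rot_s in us.
rewrite -(size_rot i) rot_s in ss.
case: s' ss cs us {rot_s} => [|z [|w r]] // _ cs /and3P[a_zwr z_wr _].
have [az a_wr] : a != z /\ a \notin w :: r by apply/norP; rewrite -in_cons.
set y := last w r.
have [eaz ezr eya] : [/\ e a z, path e z (w :: r) & e y a].
  by move: cs; rewrite /cycle rcons_path /= => /andP[/and3P[-> -> ->] ->].
have yr : y \in w :: r by exact: mem_last.
have [ya yz] : y != a /\ y != z.
  by split; apply: contraTneq yr => ->.
have ezr' : path e' z (w :: r).
  apply: (sub_in_path e_e' _ ezr); apply/allP => x xs; rewrite inE.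
  by apply: contraTneq xs => ->.
have czy : connect e' z y by apply/connectP; exists (w :: r).
have from_a : e' a z \/ z = b.
  move: (ee' _ _ eaz); rewrite eqxx (eq_sym z a) (negbTE az) andbF orbF.
  by case/orP=> [|/eqP]; auto.
have to_a : e' y a \/ y = b.
  move: (ee' _ _ eya); rewrite eqxx (negbTE ya) andbT /=.
  by case/orP=> [|/eqP]; auto.
case: from_a to_a => [eaz' | zb] [eya' | yb].
- by left; rewrite /cycle rcons_path; apply/andP; split; first by rewrite /= eaz'.
- by right; rewrite -yb (connect_trans (connect1 eaz') czy).
- by right; rewrite sym_connect_sym // -zb (connect_trans czy (connect1 eya')).
- by move: yz; rewrite yb zb eqxx.
Qed.

Definition exchangeable T u v w :=
  [&& w != u, [set u; w] \in T & connect (tadj (T :\ [set u; w])) v w].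

(* [w] is the neighbour of [u] on the path from [v] to [u] in [T]. *)
Lemma exists_exchangeable T u v : graph_connected T -> u != v ->
  exists w, exchangeable T u v w.
Proof.
move=> Tc uv; have /connectP[p pP up] : connect (tadj T) v u.
  by move/forallP/(_ v)/forallP/(_ u): Tc.
case: (shortenP pP) up => {pP} p pP p_uniq _ up.
case/lastP: p pP p_uniq up => [|q z] pP p_uniq /= up; first by rewrite up eqxx in uv.
rewrite last_rcons in up; subst z.
move: pP p_uniq; rewrite rcons_path -rcons_cons rcons_uniq.
move=> /andP[qP /andP[wu wuT]] /andP[u_vq _]; exists (last v q).
rewrite /exchangeable wu setUC wuT /=; apply/connectP; exists q => //.
apply: (@sub_in_path _ [pred a | a != u] (tadj T)) qP; last first.
  by apply/allP => a a_vq /=; apply: contraNneq u_vq => <-.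
move=> a b au bu /andP[ab abT]; rewrite /tadj ab !inE abT andbT.
apply: contraNneq au => /(set2_eq_cases ab) /orP[/andP[_ /eqP bu'] | /andP[-> _] //].
by move: bu; rewrite inE bu' eqxx.
Qed.

Section Exchange.

Variables (T : {set {set 'I_n}}) (u v w : 'I_n).
Hypotheses (uv : u != v) (exw : exchangeable T u v w).

Let T' := [set u; v] |: (T :\ [set u; w]).

Lemma exchange_subset : T \subset Kn_edges n -> T' \subset Kn_edges n.
Proof.
move=> TK; apply/subsetP => e; rewrite !inE => /orP[/eqP -> | /andP[_ eT]].
  by rewrite cards2 uv.
by move: (subsetP TK _ eT); rewrite inE.
Qed.

Lemma exchange_connected : graph_connected T -> graph_connected T'.
Proof.
move=> Tc; have [wu uwT vw] := and3P exw.
have T'_sym := sym_connect_sym (tadj_sym T').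
have T'_conn : subrel (connect (tadj (T :\ [set u; w]))) (connect (tadj T')).
  have sub_T' : T :\ [set u; w] \subset T' by exact: subsetUr.
  by apply: connect_sub => x y /(subrel_tadj sub_T') /connect1.
have uw' : connect (tadj T') u w.
  apply: connect_trans (T'_conn _ _ vw); apply: connect1.
  by rewrite /tadj uv !inE eqxx.
apply/forallP => x; apply/forallP => y.
have /connect_sub -> // : connect (tadj T) x y by move/forallP/(_ x)/forallP/(_ y): Tc.
move=> a b /andP[ab abT]; have [E | abNuw] := eqVneq [set a; b] [set u; w].
  by case/orP: (set2_eq_cases ab E) => /andP[/eqP -> /eqP ->]; rewrite // T'_sym.
by apply: connect1; rewrite /tadj ab !inE abNuw abT orbT.
Qed.

(* A cycle of [T'] either avoids [uv], and is then a cycle of [T], or yields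
   a [u]-[v] path, hence a [u]-[w] path, in [T] minus its bridge [uw]. *)
Lemma exchange_acyclic : acyclic T -> acyclic T'.
Proof.
move=> acT s us ss; apply/negP => cs; have [wu uwT vw] := and3P exw.
have T'_edges x y : tadj T' x y ->
    [|| tadj (T :\ [set u; w]) x y, (x == u) && (y == v) | (x == v) && (y == u)].
  move=> /andP[xy]; rewrite !inE => /orP[/eqP E | xyT].
    by rewrite (set2_eq_cases xy E) orbT.
  by rewrite /tadj xy !inE xyT.
case: (cycle_or_connect (tadj_sym _) us ss cs T'_edges) => [cT | cuv].
  by move/negP: (acT s us ss); apply; apply: sub_cycle cT; apply/subrel_tadj/subsetDl.
have uw : u != w by rewrite eq_sym.
by move/negP: (acyclic_bridge acT uw uwT); apply; apply: connect_trans cuv vw.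
Qed.

End Exchange.

Definition exchange_vertex T u v := odflt u [pick w | exchangeable T u v w].

Definition exchange_tree T u v := [set u; v] |: (T :\ [set u; exchange_vertex T u v]).

Lemma exchange_vertexP T u v : graph_connected T -> u != v ->
  exchangeable T u v (exchange_vertex T u v).
Proof.
move=> Tc uv; rewrite /exchange_vertex; case: pickP => [w // | noex].
by have [w] := exists_exchangeable Tc uv; rewrite noex.
Qed.

Lemma exchange_tree_spanning T u v : is_spanning_tree T -> u != v ->
  is_spanning_tree (exchange_tree T u v).
Proof.
case/and3P => TK Tc /asboolP acT uv; have exw := exchange_vertexP Tc uv.
rewrite /is_spanning_tree exchange_subset ?exchange_connected //.
exact/asboolP/exchange_acyclic.
Qed.

Lemma exchange_treeK T u v : graph_connected T -> u != v -> [set u; v] \notin T ->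
  [set u; exchange_vertex T u v] |: (exchange_tree T u v :\ [set u; v]) = T.
Proof.
move=> Tc uv uvT; have /and3P[_ uwT _] := exchange_vertexP Tc uv.
by rewrite setU1K ?setD1K // !inE (negbTE uvT) andbF.
Qed.

Definition avoiding_trees X := [set T in spanning_trees n | [disjoint X & T]].

Definition star u (N : {set 'I_n}) : {set {set 'I_n}} := [set [set u; v] | v in N].

Lemma avoiding_trees0 : avoiding_trees set0 = spanning_trees n.
Proof. by apply/setP => T; rewrite !inE disjoints_subset sub0set andbT. Qed.

Lemma avoiding_trees_subset X Y :
  X \subset Y -> avoiding_trees Y \subset avoiding_trees X.
Proof.
move=> XY; apply/subsetP => T; rewrite !inE => /andP[-> dYT].
exact: disjointWl dYT.
Qed.

Section Star.

Variables (X : {set {set 'I_n}}) (u : 'I_n) (N : {set 'I_n}).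
Hypotheses (uN : u \notin N) (X_u : forall e, e \in X -> u \notin e).

Let A := avoiding_trees (X :|: star u N).
Let exchange_pair (p : {set {set 'I_n}} * 'I_n) :=
  (exchange_tree p.1 u p.2, exchange_vertex p.1 u p.2).

Lemma in_avoiding_star T v : T \in A -> v \in N ->
  [/\ is_spanning_tree T, [disjoint X & T], u != v
     & forall v', v' \in N -> [set u; v'] \notin T].
Proof.
rewrite !inE => /andP[sT dT] vN; split => //.
- exact: disjointWl (subsetUl _ _) dT.
- by apply: contraNneq uN => ->.
by move=> v' v'N; rewrite (disjointFr dT) // !inE; apply/orP; right; apply: imset_f.
Qed.

Lemma exchange_pair_inj : {in setX A N &, injective exchange_pair}.
Proof.
case=> T1 v1 [T2 v2] /setXP[/= T1A v1N] /setXP[/= T2A v2N] [E Ew].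
have [/and3P[_ T1c _] _ uv1 T1N] := in_avoiding_star T1A v1N.
have [/and3P[_ T2c _] _ uv2 T2N] := in_avoiding_star T2A v2N.
suff v12 : v1 = v2.
  subst v2; rewrite -(exchange_treeK T1c uv1 (T1N _ v1N)).
  by rewrite -(exchange_treeK T2c uv1 (T2N _ v1N)) E Ew.
have : [set u; v1] \in exchange_tree T2 u v2 by rewrite -E !inE eqxx.
rewrite !inE (negbTE (T2N _ v1N)) andbF orbF => /eqP /(set2_eq_cases uv1).
by rewrite eqxx (negbTE uv2) /= orbF => /eqP.
Qed.

Lemma exchange_pair_image :
  exchange_pair @: setX A N \subset setX (avoiding_trees X :\: A) [set: 'I_n].
Proof.
apply/subsetP => _ /imsetP[[T v] /setXP[TA vN] ->].
have [sT dXT uv TN] := in_avoiding_star TA vN.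
have uv_star : [set u; v] \in star u N by exact: imset_f.
rewrite !inE exchange_tree_spanning //= andbT; apply/andP; split.
  have uv_XN : [set u; v] \in X :|: star u N by rewrite inE uv_star orbT.
  by apply/negP => /disjointFr/(_ uv_XN); rewrite !inE eqxx.
rewrite disjoints_subset; apply/subsetP => e eX; rewrite !inE negb_or.
rewrite (disjointFr dXT eX) andbF andbT.
by apply: contraNneq (X_u eX) => ->; rewrite set21.
Qed.

Lemma avoiding_star_card : (#|A| * (n + #|N|) <= n * #|avoiding_trees X|)%N.
Proof.
have := subset_leq_card exchange_pair_image.
rewrite card_in_imset; last exact: exchange_pair_inj.
rewrite !cardsX cardsT card_ord -(cardsID A (avoiding_trees X)).
rewrite (setIidPr (avoiding_trees_subset (subsetUl X (star u N)))) => AN_le.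
rewrite !mulnDr; apply: leq_add; first by rewrite mulnC.
by rewrite [n * _]mulnC.
Qed.

End Star.

Section Bipartite.

Variables (U V : {set 'I_n}) (F : {set {set 'I_n}}) (l : nat).
Hypotheses (UV_disj : [disjoint U & V])
  (F_UV : F \subset [set [set u; v] | u in U, v in V])
  (F_deg : forall u, u \in U -> (l <= bdeg V F u)%N).

Definition edges_at (s : seq 'I_n) := [set e in F | has (fun x => x \in e) s].

Lemma edges_at_cons u s : u \in U ->
  edges_at (u :: s) = edges_at s :|: star u [set v in V | [set u; v] \in F].
Proof.
move=> uU; apply/setP => e; rewrite !inE /=; apply/idP/idP.
  case/andP=> eF /orP[ue | es]; last by rewrite eF es.
  apply/orP; right; have /(subsetP F_UV)/imset2P[a b aU bV e_ab] := eF; subst e.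
  case/set2P: ue => [-> | ub]; last by move: (disjointFr UV_disj uU); rewrite ub bV.
  by apply: imset_f; rewrite inE bV eF.
case/orP=> [/andP[-> ->] // | /imsetP[v]]; first by rewrite orbT.
by rewrite inE => /andP[_ uvF] ->; rewrite uvF set21.
Qed.

Lemma notin_edges_at u s : u \in U -> u \notin s -> {subset s <= U} ->
  forall e, e \in edges_at s -> u \notin e.
Proof.
have UnV x : x \in U -> x \in V = false := disjointFr UV_disj.
move=> uU us sU e; rewrite inE => /andP[/(subsetP F_UV)/imset2P[a b aU bV ->]].
case/hasP=> x xs /set2P[xa | xb]; last by rewrite -xb UnV ?sU in bV.
rewrite in_set2 negb_or; apply/andP; split.
  by apply: contraNneq us => ->; rewrite -xa.
by apply: contraTneq bV => <-; rewrite UnV.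
Qed.

Lemma avoiding_edges_at_card s : uniq s -> {subset s <= U} ->
  (#|avoiding_trees (edges_at s)| * (n + l) ^ size s
     <= n ^ size s * #|spanning_trees n|)%N.
Proof.
elim: s => [|u s IH] /= => [_ _ | /andP[us s_uniq] usU].
  rewrite muln1 mul1n -avoiding_trees0; apply/subset_leq_card/avoiding_trees_subset.
  exact: sub0set.
have uU : u \in U by apply: usU; rewrite inE eqxx.
have sU : {subset s <= U} by move=> x xs; apply: usU; rewrite inE xs orbT.
set N := [set v in V | [set u; v] \in F].
have uN : u \notin N by rewrite inE (disjointFr UV_disj uU).
have := avoiding_star_card uN (notin_edges_at uU us sU).
rewrite -edges_at_cons // => step.
apply: (@leq_trans (n * #|avoiding_trees (edges_at s)| * (n + l) ^ size s)).
  rewrite expnS mulnA leq_mul2r; apply/orP; right; apply: leq_trans step.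
  by rewrite leq_mul2l leq_add2l F_deg ?orbT.
by rewrite expnS -!mulnA leq_mul2l IH ?orbT.
Qed.

Lemma edges_at_enum : edges_at (enum U) = F.
Proof.
apply/setP => e; rewrite inE andb_idr // => /(subsetP F_UV)/imset2P[a b aU _ ->].
by apply/hasP; exists a; rewrite ?mem_enum ?set21.
Qed.

Lemma avoiding_bipartite_card :
  (#|avoiding_trees F| * (n + l) ^ #|U| <= n ^ #|U| * #|spanning_trees n|)%N.
Proof.
rewrite -edges_at_enum [#|U|]cardE; apply: avoiding_edges_at_card; first exact: enum_uniq.
by move=> x; rewrite mem_enum.
Qed.

End Bipartite.

End SpanningTrees.

Local Open Scope R_scope.

Lemma INR_expn a k : INR (a ^ k) = INR a ^ k.
Proof. by elim: k => [|k IH] //=; rewrite expnS -multE mult_INR IH. Qed.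

Lemma exp_neg_ln_mul q k : 0 < q -> exp (- (ln q * INR k)) = / q ^ k.
Proof. by move=> q0; rewrite exp_Ropp Rmult_comm -Rpower_pow. Qed.

(* [a / 0 = 0] in [R], so no positivity assumption on [S] is needed. *)
Lemma Rdiv_le_Rinv a S p : 0 <= a -> 0 < p -> a * p <= S -> a / S <= / p.
Proof.
move=> a0 p0 apS; have [-> | S0] : S = 0 \/ 0 < S by nra.
  by rewrite /Rdiv Rinv_0 Rmult_0_r; left; apply: Rinv_0_lt_compat.
apply: (Rmult_le_reg_r (S * p)); first nra.
have -> : a / S * (S * p) = a * p by field; lra.
by have -> : / p * (S * p) = S by field; lra.
Qed.

Lemma mul_pow_le_of_count (a S n l k : nat) (q : R) :
  0 < q -> INR n * q <= INR n + INR l -> (0 < n)%N \/ k = 0%N ->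
  (a * (n + l) ^ k <= n ^ k * S)%N -> INR a * q ^ k <= INR S.
Proof.
move=> q0 nq nk /leP/le_INR; rewrite !mult_INR !INR_expn plus_INR => count.
case: nk => [n0 | k0]; last by move: count; rewrite k0 /= Rmult_1_r Rmult_1_l.
apply: (Rmult_le_reg_l (INR n ^ k)); first by apply/pow_lt/lt_0_INR/ltP.
apply: Rle_trans count; rewrite -Rmult_assoc (Rmult_comm _ (INR a)) Rmult_assoc.
rewrite -Rpow_mult_distr; apply: Rmult_le_compat_l; first exact: pos_INR.
by apply: pow_incr; split => //; apply: Rmult_le_pos (pos_INR n) (Rlt_le _ _ q0).
Qed.

Theorem lemma2p10 :
  exists eps0 : R, Rlt 0 eps0 /\
  forall eps : R, Rlt 0 eps -> Rlt eps eps0 ->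
  exists c : R, Rlt 0 c /\
  forall (n m l k : nat) (U V : {set 'I_n}) (F : {set {set 'I_n}}),
    Rle (Rmult eps (INR n)) (INR m) ->
    Rle (Rmult eps (INR m)) (INR l) -> (l <= m)%N ->
    (k + m <= n)%N ->
    [disjoint U & V] ->
    #|U| = k -> #|V| = m ->
    F \subset [set [set u; v] | u in U, v in V] ->
    (forall u, u \in U -> (l <= bdeg V F u)%N) ->
    Rle (prob_avoid F) (exp (Ropp (Rmult c (INR k)))).
Proof.
exists 1; split; first exact: Rlt_0_1.
move=> eps eps0 _; have q0 : 0 < 1 + eps * eps by nra.
exists (ln (1 + eps * eps)); split; first by rewrite -ln_1; apply: ln_increasing; nra.
move=> n m l k U V F eps_n eps_m _ km UV_disj Uk _ F_UV F_deg.
have count := avoiding_bipartite_card UV_disj F_UV F_deg; rewrite Uk in count.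
have eps2_n : eps * (eps * INR n) <= eps * INR m by apply: Rmult_le_compat_l; lra.
have nq : INR n * (1 + eps * eps) <= INR n + INR l by nra.
have nk : (0 < n)%N \/ k = 0%N.
  by case: k km {Uk count} => [|k] km; [right | left; apply: leq_trans km].
rewrite exp_neg_ln_mul //; apply: Rdiv_le_Rinv; first exact: pos_INR.
  exact: pow_lt.
exact: mul_pow_le_of_count nq nk count.
Qed.
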